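(* Let $V$ be a real vector space of dimension $m\ge3$ with a positive definite inner product, and let $R\neq0$ be a Jacobi-Tsankov algebraic curvature tensor on $V$. Suppose that $r(x)=m-1$ for some $x\in S(V)$. Then: \begin{enumerate} \item $J(\cdot)$ has maximal rank $m-1$ on an open dense subset of $V$; \item $R$ has constant sectional curvature $c\neq0$, i.e. $R=cR_0$ with $c\ne 0$. \end{enumerate}
   Context: An algebraic curvature tensor is $R\in\otimes^4V^*$ satisfying $R(x,y,z,w)=R(z,w,x,y)=-R(y,x,z,w)$ and $R(x,y,z,w)+R(y,z,x,w)+R(z,x,y,w)=0$. The curvature operator $\mathcal{R}(x,y)$ is defined by $\langle\mathcal{R}(x,y)z,w\rangle=R(x,y,z,w)$; the Jacobi operator is $J(x):y\mapsto\mathcal{R}(y,x)x$, and $r(x)=\operatorname{Rank}J(x)$. $S(V)$ is the unit sphere of $V$. $R$ is Jacobi-Tsankov if $x\perp y$ implies $J(x)J(y)=J(y)J(x)$. $R_0$ is the tensor with curvature operator $R_0(x,y)z=\langle y,z\rangle x-\langle x,z\rangle y$. *)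

From HB Require Import structures.
From mathcomp Require Import all_boot all_order all_algebra.
From mathcomp Require Import all_classical all_reals all_analysis.
Set Implicit Arguments. Unset Strict Implicit. Unset Printing Implicit Defensive.
Import Order.TTheory GRing.Theory Num.Theory.
Local Open Scope ring_scope.

(* V = 'rV[R]_m (coordinates w.r.t. a fixed basis), with a positive
   definite inner product given by a symmetric positive definite Gram
   matrix G: <x, y> = x G y^T. *)
Definition ip (R : realType) (m : nat) (G : 'M[R]_m) (x y : 'rV[R]_m) : R :=
  (x *m G *m y^T) 0 0.

Definition pos_def_ip (R : realType) (m : nat) (G : 'M[R]_m) : Prop :=
  G^T = G /\ forall x : 'rV[R]_m, x != 0 -> 0 < ip G x x.

Definition tens (R : realType) (m : nat) (T : 'I_m -> 'I_m -> 'I_m -> 'I_m -> R)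
  (x y z w : 'rV[R]_m) : R :=
  \sum_(i < m) \sum_(j < m) \sum_(k < m) \sum_(l < m)
    x 0 i * y 0 j * z 0 k * w 0 l * T i j k l.

Definition is_act (R : realType) (m : nat) (T : 'I_m -> 'I_m -> 'I_m -> 'I_m -> R) : Prop :=
  forall x y z w : 'rV[R]_m,
    [/\ tens T x y z w = tens T z w x y,
        tens T x y z w = - tens T y x z w &
        tens T x y z w + tens T y z x w + tens T z x y w = 0].

(* curvature operator: <Rop x y z, w> = tens T x y z w *)
Definition Rop (R : realType) (m : nat) (G : 'M[R]_m)
  (T : 'I_m -> 'I_m -> 'I_m -> 'I_m -> R) (x y z : 'rV[R]_m) : 'rV[R]_m :=
  (\row_(l < m) tens T x y z (delta_mx 0 l)) *m invmx G.

(* Jacobi operator J(x) : y |-> Rop y x x, as the matrix acting on row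
   vectors: y *m Jac x = Rop y x x. *)
Definition Jac (R : realType) (m : nat) (G : 'M[R]_m)
  (T : 'I_m -> 'I_m -> 'I_m -> 'I_m -> R) (x : 'rV[R]_m) : 'M[R]_m :=
  \matrix_(i < m) Rop G T (delta_mx 0 i) x x.

Definition jrank (R : realType) (m : nat) (G : 'M[R]_m)
  (T : 'I_m -> 'I_m -> 'I_m -> 'I_m -> R) (x : 'rV[R]_m) : nat :=
  \rank (Jac G T x).

Definition jacobi_tsankov (R : realType) (m : nat) (G : 'M[R]_m)
  (T : 'I_m -> 'I_m -> 'I_m -> 'I_m -> R) : Prop :=
  forall x y : 'rV[R]_m, ip G x y = 0 ->
    Jac G T x *m Jac G T y = Jac G T y *m Jac G T x.

Definition R0 (R : realType) (m : nat) (G : 'M[R]_m) (x y z w : 'rV[R]_m) : R :=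
  ip G y z * ip G x w - ip G x z * ip G y w.

(* A unit vector e with rank J(e) = m - 1 has kernel J(e) = span e.  For y orthogonal
   to e, Jacobi-Tsankov gives J(e) J(y) e = J(y) J(e) e = 0, so J(y) e is a multiple of e;
   commuting J(e+y) with J(e-y) (for |y| = |e|) gives |J(y) e| = |J(e) y|, and together
   these force every y orthogonal to e to be an eigenvector of J(e).  The symmetric
   operator J(e) is then c (Id - e e^T) with c != 0.  Commuting J(e+a) with J(b) for
   a, b orthogonal to e transfers this form to J(b), and choosing b orthogonal to both e
   and any x transfers it to J(x).  So R(y,x,x,w) = c R_0(y,x,x,w) for all x, y, w,
   which by polarization and the Bianchi identity gives R = c R_0; then
   kernel J(x) = span x for every x != 0, an open dense set. *)

From mathcomp Require Import all_boot all_order all_algebra.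
From mathcomp Require Import all_classical all_reals all_analysis.
From mathcomp Require Import ring lra zify.
Set Implicit Arguments. Unset Strict Implicit. Unset Printing Implicit Defensive.
Import Order.TTheory GRing.Theory Num.Theory numFieldNormedType.Exports.
Local Open Scope classical_set_scope.
Local Open Scope ring_scope.

Section InnerProduct.
Variables (R : realType) (m : nat) (G : 'M[R]_m).
Implicit Types x y : 'rV[R]_m.

Lemma ipDl x x' y : ip G (x + x') y = ip G x y + ip G x' y.
Proof. by rewrite /ip !mulmxDl mxE. Qed.
Lemma ipDr x y y' : ip G x (y + y') = ip G x y + ip G x y'.
Proof. by rewrite /ip linearD /= mulmxDr mxE. Qed.
Lemma ipZl a x y : ip G (a *: x) y = a * ip G x y.
Proof. by rewrite /ip -!scalemxAl mxE. Qed.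
Lemma ipZr a x y : ip G x (a *: y) = a * ip G x y.
Proof. by rewrite /ip linearZ /= -scalemxAr mxE. Qed.
Lemma ip0l y : ip G 0 y = 0.
Proof. by rewrite -(scale0r 0) ipZl mul0r. Qed.
Lemma ip0r x : ip G x 0 = 0.
Proof. by rewrite -(scale0r 0) ipZr mul0r. Qed.
Lemma ipNl x y : ip G (- x) y = - ip G x y.
Proof. by rewrite -scaleN1r ipZl mulN1r. Qed.
Lemma ipNr x y : ip G x (- y) = - ip G x y.
Proof. by rewrite -scaleN1r ipZr mulN1r. Qed.
Lemma ipBl x x' y : ip G (x - x') y = ip G x y - ip G x' y.
Proof. by rewrite ipDl ipNl. Qed.
Lemma ipBr x y y' : ip G x (y - y') = ip G x y - ip G x y'.
Proof. by rewrite ipDr ipNr. Qed.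
Lemma ip1_neq0 x : ip G x x = 1 -> x != 0.
Proof. by apply: contra_eqN => /eqP ->; rewrite ip0l eq_sym oner_eq0. Qed.

Lemma ipC : G^T = G -> forall x y, ip G x y = ip G y x.
Proof.
move=> sG x y; rewrite /ip -[in LHS](trmxK (x *m G *m y^T)) mxE.
by rewrite !trmx_mul trmxK sG mulmxA.
Qed.

End InnerProduct.

Section PositiveDefinite.
Variables (R : realType) (m : nat) (G : 'M[R]_m).
Hypothesis HG : pos_def_ip G.
Implicit Types x y : 'rV[R]_m.

Lemma ip_eq0 x : ip G x x = 0 -> x = 0.
Proof. by case: HG => _ pG /eqP; apply: contraTeq => /pG /gt_eqF ->. Qed.

Lemma ip_neq0 x : x != 0 -> ip G x x != 0.
Proof. by apply: contra => /eqP/ip_eq0/eqP. Qed.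

Lemma ip_ext x y : (forall w, ip G x w = ip G y w) -> x = y.
Proof. by move=> xy; apply/subr0_eq/ip_eq0; rewrite ipBl xy subrr. Qed.

Lemma unitmx_pos_def : G \in unitmx.
Proof.
rewrite -row_free_unit -kermx_eq0; apply/eqP/row_matrixP => i.
rewrite row0; apply: ip_eq0.
by rewrite /ip (sub_kermxP (row_sub i (kermx G))) mul0mx mxE.
Qed.

Lemma ip_normalize x : x != 0 -> exists k : R, k != 0 /\ ip G (k *: x) (k *: x) = 1.
Proof.
case: HG => _ /[apply] xx_gt0.
have k_gt0 : 0 < Num.sqrt (ip G x x) by rewrite sqrtr_gt0.
exists (Num.sqrt (ip G x x))^-1; split; first by rewrite invr_eq0 gt_eqF.
by rewrite ipZl ipZr mulrA -expr2 exprVn sqr_sqrtr ?ltW // mulVf ?gt_eqF.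
Qed.

Lemma exists_unit_orthogonal x y : (2 < m)%N ->
  exists b, [/\ ip G b b = 1, ip G x b = 0 & ip G y b = 0].
Proof.
move=> m_gt2; set M := row_mx (G *m x^T) (G *m y^T).
have : kermx M != 0.
  apply: contraTneq m_gt2 => kerM0; have := mxrank_ker M.
  by rewrite kerM0 mxrank0; have := rank_leq_col M; lia.
case/rowV0Pn => v /sub_kermxP; rewrite mul_mx_row => /eqP.
rewrite row_mx_eq0 => /andP[/eqP vx /eqP vy] /ip_normalize[k [_ kv1]].
by exists (k *: v); split => //; rewrite (ipC HG.1) ipZl /ip -mulmxA ?vx ?vy mxE mulr0.
Qed.

End PositiveDefinite.

Section Tensor.
Variables (R : realType) (m : nat) (T : 'I_m -> 'I_m -> 'I_m -> 'I_m -> R).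
Implicit Types x y z w : 'rV[R]_m.

Lemma tensD1 x x' y z w : tens T (x + x') y z w = tens T x y z w + tens T x' y z w.
Proof.
rewrite /tens -big_split; apply: eq_bigr => i _; rewrite -big_split; apply: eq_bigr => j _.
rewrite -big_split; apply: eq_bigr => k _; rewrite -big_split; apply: eq_bigr => l _.
by rewrite mxE !mulrDl.
Qed.

Lemma tensD4 x y z w w' : tens T x y z (w + w') = tens T x y z w + tens T x y z w'.
Proof.
rewrite /tens -big_split; apply: eq_bigr => i _; rewrite -big_split; apply: eq_bigr => j _.
rewrite -big_split; apply: eq_bigr => k _; rewrite -big_split; apply: eq_bigr => l _.
by rewrite mxE mulrDr !mulrDl.
Qed.

Lemma tensZ1 a x y z w : tens T (a *: x) y z w = a * tens T x y z w.
Proof.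
rewrite /tens mulr_sumr; apply: eq_bigr => i _; rewrite mulr_sumr; apply: eq_bigr => j _.
rewrite mulr_sumr; apply: eq_bigr => k _; rewrite mulr_sumr; apply: eq_bigr => l _.
by rewrite mxE; ring.
Qed.

Lemma tensZ4 a x y z w : tens T x y z (a *: w) = a * tens T x y z w.
Proof.
rewrite /tens mulr_sumr; apply: eq_bigr => i _; rewrite mulr_sumr; apply: eq_bigr => j _.
rewrite mulr_sumr; apply: eq_bigr => k _; rewrite mulr_sumr; apply: eq_bigr => l _.
by rewrite mxE; ring.
Qed.

Lemma tens_sum1 (F : 'I_m -> 'rV[R]_m) y z w :
  tens T (\sum_i F i) y z w = \sum_i tens T (F i) y z w.
Proof.
apply: (big_morph (fun u => tens T u y z w) (fun a b => tensD1 a b y z w)).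
by rewrite -(scale0r 0) tensZ1 mul0r.
Qed.

Lemma tens_sum4 (F : 'I_m -> 'rV[R]_m) x y z :
  tens T x y z (\sum_i F i) = \sum_i tens T x y z (F i).
Proof.
apply: (big_morph (fun u => tens T x y z u) (tensD4 x y z)).
by rewrite -(scale0r 0) tensZ4 mul0r.
Qed.

Lemma ip_Jac (G : 'M[R]_m) : G \in unitmx ->
  forall x y w, ip G (y *m Jac G T x) w = tens T y x x w.
Proof.
move=> uG x y w.
have -> : Jac G T x =
    (\matrix_(i, l) tens T (delta_mx 0 i) x x (delta_mx 0 l)) *m invmx G.
  apply/row_matrixP => i; rewrite row_mul rowK /Rop; congr (_ *m _).
  by apply/rowP => l; rewrite !mxE.
rewrite /ip !mulmxA -(mulmxA _ (invmx G)) mulVmx // mulmx1.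
rewrite {2}(row_sum_delta y) {2}(row_sum_delta w) tens_sum1 !mxE.
under eq_bigr => j _ do rewrite !mxE mulr_suml.
rewrite exchange_big; apply: eq_bigr => i _.
rewrite tensZ1 tens_sum4 mulr_sumr; apply: eq_bigr => j _.
by rewrite tensZ4 !mxE; ring.
Qed.

End Tensor.

Lemma mxrank_pred_kerP (F : fieldType) n (A : 'M[F]_n) (x : 'rV[F]_n) :
  x != 0 -> x *m A = 0 -> \rank A = n.-1 <-> (kermx A <= x)%MS.
Proof.
move=> x0 xA0; have xK : (x <= kermx A)%MS by apply/sub_kermxP.
have rkx : \rank x = 1%N by rewrite rank_rV x0.
have := mxrankS xK; have := mxrank_ker A; have := rank_leq_row A.
rewrite rkx; split=> [rkA | /mxrankS]; last by rewrite rkx; lia.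
by case: (mxrank_leqif_sup xK) => _ <-; rewrite rkx; lia.
Qed.

Section CurvatureLikeForms.
Variables (R : realFieldType) (V : zmodType) (D : V -> V -> V -> V -> R).
Hypotheses (D_anti : forall x y z w, D x y z w = - D y x z w)
  (D_bianchi : forall x y z w, D x y z w + D y z x w + D z x y w = 0)
  (D_add2 : forall x y y' z w, D x (y + y') z w = D x y z w + D x y' z w)
  (D_add3 : forall x y z z' w, D x y (z + z') w = D x y z w + D x y z' w).

Lemma curvature_eq0_of_jacobi : (forall x y w, D y x x w = 0) ->
  forall x y z w, D x y z w = 0.
Proof.
move=> jac0.
have swap23 y b d w : D y b d w = - D y d b w.
  have := jac0 (b + d) y w; rewrite D_add2 !D_add3 !jac0; lra.
move=> x y z w; have := D_bianchi x y z w.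
rewrite (swap23 y z x) (D_anti y x z) (D_anti z x y) (swap23 x z y); lra.
Qed.

End CurvatureLikeForms.

Lemma dense_setC1 (R : realFieldType) (V : normedModType R) (u p : V) :
  u != 0 -> dense (~` [set p]).
Proof.
move=> u0 O [q Oq] oO.
have [qp|qp] := eqVneq q p; last by exists q; split => //= /eqP; rewrite (negbTE qp).
pose f r := p + r *: u.
have oOf : open (f @^-1` O).
  apply: open_comp => // r _.
  by apply: cvgD; [exact: cvg_cst | exact: scalel_continuous].
have Of0 : (f @^-1` O) 0 by rewrite /f /= scale0r addr0 -qp.
have [r [Ofr /= r0]] := dense_set1C 0 (ex_intro _ 0 Of0) oOf.
exists (f r); split => //= /eqP; rewrite -subr_eq0 addrC addKr scaler_eq0.
by rewrite (negbTE u0) orbF; apply/negP/eqP.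
Qed.

Section CurvatureTensor.
Variables (R : realType) (m : nat) (T : 'I_m -> 'I_m -> 'I_m -> 'I_m -> R).
Hypothesis HT : is_act T.
Implicit Types x y z w : 'rV[R]_m.
Local Notation t := (tens T).

Lemma tens_pair x y z w : t x y z w = t z w x y.
Proof. by case: (HT x y z w). Qed.
Lemma tens_anti12 x y z w : t x y z w = - t y x z w.
Proof. by case: (HT x y z w). Qed.
Lemma tens_bianchi x y z w : t x y z w + t y z x w + t z x y w = 0.
Proof. by case: (HT x y z w). Qed.
Lemma tens_anti34 x y z w : t x y z w = - t x y w z.
Proof. by rewrite tens_pair tens_anti12 tens_pair. Qed.
Lemma tens_xx x z w : t x x z w = 0.
Proof. by have := tens_anti12 x x z w; lra. Qed.
Lemma tens_jacobi_sym x y w : t y x x w = t w x x y.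
Proof. by rewrite tens_pair tens_anti12 tens_anti34 opprK. Qed.

Lemma tensD2 x y y' z w : t x (y + y') z w = t x y z w + t x y' z w.
Proof. by rewrite tens_anti12 tensD1 opprD -!tens_anti12. Qed.
Lemma tensD3 x y z z' w : t x y (z + z') w = t x y z w + t x y z' w.
Proof. by rewrite tens_pair tensD1 (tens_pair z) (tens_pair z'). Qed.
Lemma tensZ2 a x y z w : t x (a *: y) z w = a * t x y z w.
Proof. by rewrite tens_anti12 tensZ1 -mulrN -tens_anti12. Qed.
Lemma tensZ3 a x y z w : t x y (a *: z) w = a * t x y z w.
Proof. by rewrite tens_pair tensZ1 (tens_pair z). Qed.

End CurvatureTensor.

Section JacobiOperator.
Variables (R : realType) (m : nat) (G : 'M[R]_m)
  (T : 'I_m -> 'I_m -> 'I_m -> 'I_m -> R).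
Hypotheses (HG : pos_def_ip G) (HT : is_act T).
Implicit Types x y z w u v : 'rV[R]_m.
Local Notation "<< x , y >>" := (ip G x y).
Local Notation t := (tens T).
Local Notation J := (Jac G T).

Let ipS : forall x y, << x, y >> = << y, x >> := ipC HG.1.
Let ipJ : forall x y w, << y *m J x, w >> = t y x x w := ip_Jac T (unitmx_pos_def HG).

Lemma Jac_sym x u v : << u *m J x, v >> = << v *m J x, u >>.
Proof. by rewrite !ipJ (tens_jacobi_sym HT). Qed.

Lemma Jac_self x : x *m J x = 0.
Proof. by apply: (ip_ext HG) => w; rewrite ipJ ip0l (tens_xx HT). Qed.

Lemma JacZ a x : J (a *: x) = a ^+ 2 *: J x.
Proof.
apply/row_matrixP => i; rewrite !rowE -scalemxAr; apply: (ip_ext HG) => w.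
by rewrite ipZl !ipJ (tensZ2 HT) (tensZ3 HT) expr2 mulrA.
Qed.

Lemma JacN x : J (- x) = J x.
Proof. by rewrite -scaleN1r JacZ sqrrN expr1n scale1r. Qed.

Lemma Jac0 : J 0 = 0.
Proof. by rewrite -(scale0r 0) JacZ expr0n scale0r. Qed.

Lemma Jac_addl_self x y : x *m J (x + y) = x *m J y - y *m J x.
Proof.
apply: (ip_ext HG) => w; rewrite ipBl !ipJ (tensD2 HT) !(tensD3 HT) !(tens_xx HT).
by rewrite (tens_anti12 HT x y x); ring.
Qed.

Definition const_curv_along c x :=
  forall y, y *m J x = c *: (<< x, x >> *: y - << y, x >> *: x).

Lemma tens_const_curv_along c x : const_curv_along c x ->
  forall y w, t y x x w = c * R0 G y x x w.
Proof. by move=> cx y w; rewrite -ipJ cx ipZl ipBl !ipZl. Qed.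

Lemma kermx_Jac_const c x : c != 0 -> x != 0 -> const_curv_along c x ->
  (kermx (J x) <= x)%MS.
Proof.
move=> c0 x0 cx; apply/row_subP => i; set v := row i _.
have /sub_kermxP := row_sub i (kermx (J x)); rewrite -/v cx => /eqP.
rewrite scaler_eq0 (negbTE c0) subr_eq0 => /eqP xxv; apply/sub_rVP.
exists (<< v, x >> / << x, x >>).
by rewrite mulrC -scalerA -xxv scalerA mulVf ?scale1r ?(ip_neq0 HG).
Qed.

Lemma rank_Jac_const c x : c != 0 -> x != 0 -> const_curv_along c x ->
  \rank (J x) = m.-1.
Proof.
move=> c0 x0 cx; apply/(mxrank_pred_kerP x0 (Jac_self x)).
exact: kermx_Jac_const c0 x0 cx.
Qed.

Lemma tens_eq_R0 c : (forall x, const_curv_along c x) ->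
  forall x y z w, t x y z w = c * R0 G x y z w.
Proof.
move=> cc x y z w; apply: subr0_eq.
apply: (curvature_eq0_of_jacobi (D := fun x y z w => t x y z w - c * R0 G x y z w)) => {x y z w}.
- by move=> x y z w; rewrite (tens_anti12 HT) /R0; ring.
- move=> x y z w; have := tens_bianchi HT x y z w.
  by rewrite /R0 (ipS z y) (ipS z x) (ipS y x); lra.
- by move=> x y y' z w; rewrite (tensD2 HT) /R0 !(ipDl, ipDr); ring.
- by move=> x y z z' w; rewrite (tensD3 HT) /R0 !(ipDl, ipDr); ring.
- by move=> x y w; rewrite (tens_const_curv_along (cc x)) subrr.
Qed.

Hypothesis HJT : jacobi_tsankov G T.

Lemma Jac_comm_orth x y v : << x, y >> = 0 -> v *m J x *m J y = v *m J y *m J x.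
Proof. by move=> /HJT xy; rewrite -!mulmxA xy. Qed.

Lemma norm_Jac_swap e y : << e, e >> = << y, y >> ->
  << e *m J y, e *m J y >> = << y *m J e, y *m J e >>.
Proof.
move=> ey; set a := e *m J y; set b := y *m J e.
have orth : << e + y, e - y >> = 0 by rewrite ipDl !ipBr ey (ipS y e); ring.
have eP : e *m J (e + y) = a - b by rewrite Jac_addl_self.
have yP : y *m J (e + y) = b - a by rewrite addrC Jac_addl_self.
have eM : e *m J (e - y) = a + b by rewrite Jac_addl_self JacN mulNmx opprK.
have yM : y *m J (e - y) = a + b.
  apply: oppr_inj; rewrite -mulNmx (addrC e) Jac_addl_self JacN mulNmx.
  by rewrite opprD addrC.
have := congr1 (ip G ^~ y) (Jac_comm_orth e orth); rewrite /= eP eM.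
rewrite (Jac_sym (e - y)) (Jac_sym (e + y)) yM yP.
by rewrite !(ipDl, ipDr, ipNl, ipNr) (ipS b a); lra.
Qed.

Lemma eigen_eq x u v p q : u *m J x = p *: u -> v *m J x = q *: v ->
  << u, v >> != 0 -> p = q.
Proof.
move=> up vq uv0; have := Jac_sym x u v.
by rewrite up vq !ipZl (ipS v u); apply: mulIf.
Qed.

Section UnitKernel.
Variable e : 'rV[R]_m.
Hypotheses (e1 : << e, e >> = 1) (ker_e : (kermx (J e) <= e)%MS).

Lemma ker_Jac_coord v : v *m J e = 0 -> v = << v, e >> *: e.
Proof.
move=> /sub_kermxP/submx_trans/(_ ker_e)/sub_rVP[k ->].
by rewrite ipZl e1 mulr1.
Qed.

Lemma Jac_orth_at_e y : << e, y >> = 0 -> e *m J y = t e y y e *: e.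
Proof.
move=> ey; rewrite -ipJ; apply: ker_Jac_coord.
by rewrite -Jac_comm_orth // Jac_self mul0mx.
Qed.

Lemma Jac_orth_unit_eigen y : << e, y >> = 0 -> << y, y >> = 1 ->
  y *m J e = t e y y e *: y.
Proof.
move=> ey y1; have ys : << y *m J e, y >> = t e y y e by rewrite ipJ (tens_pair HT).
have := norm_Jac_swap (etrans e1 (esym y1)).
rewrite Jac_orth_at_e // ipZl ipZr e1 mulr1 => norm.
apply: subr0_eq; apply: (ip_eq0 HG).
by rewrite !(ipBl, ipBr, ipZl, ipZr) ys (ipS y) ys y1 -norm; ring.
Qed.

Lemma Jac_orth_eigen y : << e, y >> = 0 -> exists s, y *m J e = s *: y.
Proof.
move=> ey; have [->|y0] := eqVneq y 0; first by exists 0; rewrite mul0mx scaler0.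
have [k [k0 ky1]] := ip_normalize HG y0.
have := Jac_orth_unit_eigen (y := k *: y); rewrite ipZr ey mulr0 => /(_ erefl ky1) hk.
exists (t e (k *: y) (k *: y) e); apply: (scalerI k0).
by rewrite scalemxAl hk !scalerA mulrC.
Qed.

Lemma const_curv_along_unit_ker : (2 < m)%N -> exists2 c, c != 0 & const_curv_along c e.
Proof.
move=> m_gt2; have [b [b1 eb _]] := exists_unit_orthogonal HG e e m_gt2.
have [c bc] := Jac_orth_eigen eb.
have scalar y : << e, y >> = 0 -> y *m J e = c *: y.
  move=> ey; have [->|y0] := eqVneq y 0; first by rewrite mul0mx scaler0.
  have [s ys] := Jac_orth_eigen ey; rewrite ys; congr (_ *: _).
  have [by0|by0] := eqVneq << b, y >> 0; last exact: esym (eigen_eq bc ys by0).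
  have [s' bys] : exists s', (b + y) *m J e = s' *: (b + y).
    by apply: Jac_orth_eigen; rewrite ipDr eb ey addr0.
  rewrite (eigen_eq ys bys); last by rewrite ipDr (ipS y b) by0 add0r (ip_neq0 HG).
  by rewrite (eigen_eq bc bys) // ipDr b1 by0 addr0 oner_neq0.
have ce : const_curv_along c e.
  move=> y; rewrite e1 scale1r -scalar; last by rewrite ipBr ipZr e1 mulr1 (ipS e y) subrr.
  by rewrite mulmxBl -scalemxAl Jac_self scaler0 subr0.
exists c => //; apply: contraTneq m_gt2 => c0.
have Je0 : J e = 0 by apply/row_matrixP => i; rewrite row0 rowE ce c0 scale0r.
have := (mxrank_pred_kerP (ip1_neq0 e1) (Jac_self e)).2 ker_e.
by rewrite Je0 mxrank0; lia.
Qed.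

Lemma const_curv_along_orth c b : c != 0 -> const_curv_along c e ->
  << e, b >> = 0 -> const_curv_along c b.
Proof.
move=> c0 ce eb.
have Je y : y *m J e = c *: (y - << y, e >> *: e) by rewrite ce e1 scale1r.
have eJ a : << e, a >> = 0 -> e *m J a = (c * << a, a >>) *: e.
  move=> ea; rewrite Jac_orth_at_e // (tens_pair HT) -ipJ Je.
  by rewrite ipZl ipBl ipZl (ipS a e) ea mul0r subr0.
have bJ a : << e, a >> = 0 -> << a, b >> = 0 -> a *m J b = (c * << b, b >>) *: a.
  move=> ea ab; have orth : << e + a, b >> = 0 by rewrite ipDl eb ab addr0.
  have eaJ : e *m J (e + a) = (c * << a, a >>) *: e - c *: a.
    by rewrite Jac_addl_self eJ // Je (ipS a e) ea scale0r subr0.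
  apply: (scalerI c0); apply: (ip_ext HG) => w.
  have := congr1 (ip G ^~ w) (Jac_comm_orth e orth).
  rewrite /= eaJ mulmxBl -!scalemxAl !(eJ b eb) -!scalemxAl eaJ !(ipBl, ipZl).
  lra.
have [->|b0] := eqVneq b 0.
  by move=> y; rewrite Jac0 mulmx0 ip0l ip0r !scale0r subrr scaler0.
have bb0 := ip_neq0 HG b0.
move=> y; set a := << b, b >> *: (y - << y, e >> *: e) - << y, b >> *: b.
have ea : << e, a >> = 0.
  by rewrite ipBr !ipZr ipBr ipZr e1 eb (ipS e y); ring.
have ab : << a, b >> = 0 by rewrite ipBl !ipZl ipBl ipZl eb; ring.
have ydec : << b, b >> *: y = a + (<< b, b >> * << y, e >>) *: e + << y, b >> *: b.
  by rewrite /a scalerBr scalerA addrAC !subrK.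
clearbody a.
apply: (scalerI bb0); rewrite scalemxAl ydec addrK !mulmxDl -!scalemxAl.
rewrite (bJ a ea ab) (eJ b eb) Jac_self scaler0 addr0; apply: (ip_ext HG) => w.
by rewrite !(ipDl, ipZl); ring.
Qed.

End UnitKernel.

Lemma const_curv_along_all e c : (2 < m)%N -> << e, e >> = 1 -> c != 0 ->
  const_curv_along c e -> forall x, const_curv_along c x.
Proof.
move=> m_gt2 e1 c0 ce x.
have [b [b1 eb xb]] := exists_unit_orthogonal HG e x m_gt2.
have ker_e := kermx_Jac_const c0 (ip1_neq0 e1) ce.
have cb := const_curv_along_orth e1 ker_e c0 ce eb.
have ker_b := kermx_Jac_const c0 (ip1_neq0 b1) cb.
by apply: (const_curv_along_orth b1 ker_b c0 cb); rewrite ipS.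
Qed.

End JacobiOperator.

Theorem lemma2p1 (R : realType) (m : nat) (G : 'M[R]_m)
  (T : 'I_m -> 'I_m -> 'I_m -> 'I_m -> R) :
  (3 <= m)%N ->
  pos_def_ip G ->
  is_act T ->
  (exists x y z w : 'rV[R]_m, tens T x y z w != 0) ->
  jacobi_tsankov G T ->
  (exists x : 'rV[R]_m, ip G x x = 1 /\ jrank G T x = m.-1) ->
  (exists U : set 'rV[R]_m,
      open U /\ dense U /\ forall x, U x -> jrank G T x = m.-1)
  /\
  (exists c : R, c != 0 /\
      forall x y z w : 'rV[R]_m, tens T x y z w = c * R0 G x y z w).
Proof.
move=> m_gt2 HG HT _ HJT [e [e1 rk_e]].
have ker_e : (kermx (Jac G T e) <= e)%MS.
  exact/(mxrank_pred_kerP (ip1_neq0 e1) (Jac_self HG HT e)).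
have [c c0 ce] := const_curv_along_unit_ker HG HT HJT e1 ker_e m_gt2.
have cc := const_curv_along_all HG HT HJT m_gt2 e1 c0 ce.
split; last by exists c; split => //; apply: tens_eq_R0.
exists (~` [set 0]); split.
  by rewrite openC; exact/accessible_closed_set1/hausdorff_accessible/norm_hausdorff.
split; first exact: dense_setC1 (ip1_neq0 e1).
by move=> x /eqP x0; apply: rank_Jac_const c0 x0 (cc x).
Qed.
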